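(* Fix integers $T,K>1$ and nonnegative numbers $\epsilon(1),\dots,\epsilon(K)$ such that $\min_{j:\epsilon(j)>0}\epsilon(j)^2\ge\frac{2}{T}\sum_{j}\epsilon(j)^2$. Then there exist fixed parameters $m(1),\dots,m(K)$ such that the following holds: for any (possibly randomized) learner strategy $A$ there exists a loss assignment $\{\ell_t(j)\}_{t\le T,j\le K}$ satisfying $|\ell_t(j)-m(j)|\le\epsilon(j)$ for all $t,j$, such that \[ \mathbb{E}_A\Big[\sum_{t=1}^{T}\ell_t(I_t)\Big]-\min_{j=1,\dots,K}\sum_{t=1}^{T}\ell_t(j)\;\ge\; \begin{cases} c\sqrt{T\sum_{j=1}^{K}\epsilon(j)^2} & \text{with bandit feedback},\\ c\sqrt{T\max_{j}\epsilon(j)^2} & \text{with full information feedback},\end{cases} \] where $c>0$ is a universal constant.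
   Context: Repeated game over $K$ arms and $T$ rounds: the loss assignment is fixed in advance (oblivious adversary); at each round the learner picks $I_t\in\{1,\dots,K\}$ and incurs $\ell_t(I_t)$. With bandit feedback she then observes only $\ell_t(I_t)$; with full information she observes $\ell_t(i)$ for all $i$. $I_t$ may depend on previous observations and the learner's internal randomness; the expectation is over that randomness. *)

From HB Require Import structures.
From mathcomp Require Import all_boot all_order all_algebra.
From mathcomp Require Import reals Rstruct.
Set Implicit Arguments. Unset Strict Implicit. Unset Printing Implicit Defensive.
Import Order.TTheory GRing.Theory Num.Theory.
Local Open Scope ring_scope.

Section Game.
Variable R : realType.
Variable K : nat.

(* A loss assignment (oblivious adversary): round t (0-based) and arm j. *)
Definition loss_assignment := nat -> 'I_K -> R.

Definition is_distr (p : 'I_K -> R) : Prop :=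
  (forall i, 0 <= p i) /\ \sum_(i < K) p i = 1.

(* Bandit feedback: the learner's history is the sequence of
   (arm played, loss observed on that arm).  A (possibly randomized)
   learner is given by the conditional law of I_t given its history. *)
Definition bandit_history := seq ('I_K * R).
Definition bandit_learner := bandit_history -> 'I_K -> R.
Definition valid_bandit_learner (A : bandit_learner) : Prop :=
  forall h, is_distr (A h).

(* Expected loss accumulated over the next n rounds, starting from
   history h (the current round index is size h). *)
Fixpoint bandit_value (A : bandit_learner) (l : loss_assignment)
    (n : nat) (h : bandit_history) : R :=
  match n with
  | 0 => 0
  | n'.+1 => \sum_(i < K) A h i *
       (l (size h) i + bandit_value A l n' (rcons h (i, l (size h) i)))
  end.

Definition bandit_expected_loss (A : bandit_learner) (l : loss_assignment)
    (T : nat) : R := bandit_value A l T [::].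

(* Full-information feedback: the learner observes (its own arm and)
   the whole loss vector of each past round. *)
Definition full_history := seq ('I_K * ('I_K -> R)).
Definition full_learner := full_history -> 'I_K -> R.
Definition valid_full_learner (A : full_learner) : Prop :=
  forall h, is_distr (A h).

Fixpoint full_value (A : full_learner) (l : loss_assignment)
    (n : nat) (h : full_history) : R :=
  match n with
  | 0 => 0
  | n'.+1 => \sum_(i < K) A h i *
       (l (size h) i + full_value A l n' (rcons h (i, l (size h))))
  end.

Definition full_expected_loss (A : full_learner) (l : loss_assignment)
    (T : nat) : R := full_value A l T [::].

(* Minimum of f over 'I_K (defaults to 0 when K = 0). *)
Definition min_over (f : 'I_K -> R) : R :=
  \big[Num.min/ head 0 [seq f j | j <- enum 'I_K]]_(j < K) f j.

(* Cumulative loss of arm j over rounds 1..T (0-based 0..T-1). *)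
Definition cum_loss (l : loss_assignment) (T : nat) (j : 'I_K) : R :=
  \sum_(t < T) l t j.

End Game.

From HB Require Import structures.
From mathcomp Require Import all_boot all_order all_algebra.
From mathcomp Require Import reals Rstruct exp.
From mathcomp Require Import ring lra.
Import Order.TTheory GRing.Theory Num.Theory.
Local Open Scope ring_scope.
Set Implicit Arguments. Unset Strict Implicit. Unset Printing Implicit Defensive.

(* Take m = 0.  The adversary draws the losses at random; averaging turns a
   lower bound on the expected regret into one fixed loss assignment.  Against
   independent zero-mean losses every learner has expected loss 0, whatever
   its feedback.

   Full information, and bandit feedback when one arm js carries a quarter of
   S = sum_j eps(j)^2: only arm js moves, by fair signs +-eps(js).  The minimum
   is below 0 and below the walk W of arm js, so the regret is at least
   E[max(-W, 0)] >= eps(js) sqrt(T) / 6, by a fourth-moment bound.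

   Otherwise, under bandit feedback, every arm i plays fair signs +-eps(i),
   except a hidden arm j, drawn with probability eps(j)^2 / S, whose sign is
   biased by d = g / eps(j) towards -eps(j), with g = sqrt(T S) / (8 T).  The
   regret is then at least g (T - n'), where n' is the expected number of
   pulls of j.  A change of measure bounds n' by the number n of pulls of j
   under fair coins, up to a Kullback-Leibler term d^2 per pull of j.  Since
   the n's add up to T and each weight is at most 1/4, the average regret is
   at least sqrt(T S) / 16. *)

Lemma exists_ge_avg (R : realType) (V : finType) (w f : V -> R) :
  (forall v, 0 <= w v) -> \sum_v w v = 1 -> exists v, \sum_u w u * f u <= f v.
Proof.
move=> w_ge0 w_sum1; have [v0 _ | V0] := pickP (@predT V); last first.
  by move: w_sum1; rewrite big_pred0 // => /eqP; rewrite eq_sym oner_eq0.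
exists [arg max_(v > v0) f v]%O; case: arg_maxP => // v _ f_le.
rewrite -[f v]mul1r -w_sum1 mulr_suml.
by apply: ler_sum => u _; apply: ler_wpM2l => //; apply: f_le.
Qed.

Lemma min_over_le (R : realType) K (f : 'I_K -> R) j : min_over f <= f j.
Proof. exact: bigmin_le. Qed.

Section IidAdversary.
Variables (R : realType) (K : nat) (V : finType).
Variables (w : V -> R) (vec : V -> 'I_K -> R).

Definition set_round (l : loss_assignment R K) t (x : 'I_K -> R) :
  loss_assignment R K := fun s => if s == t then x else l s.

Lemma set_round_eq l t x : set_round l t x t = x.
Proof. by rewrite /set_round eqxx. Qed.

Lemma set_round_gt l t x s : (t < s)%N -> set_round l t x s = l s.
Proof. by rewrite /set_round => /gtn_eqF ->. Qed.

Lemma sum_window_set_round l t x n j :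
  \sum_(i < n.+1) set_round l t x (t + i)%N j = x j + \sum_(i < n) l (t.+1 + i)%N j.
Proof.
rewrite big_ord_recl addn0 set_round_eq; congr (_ + _); apply: eq_bigr => i _.
by rewrite set_round_gt -?addSnnS // addSn ltnS leq_addr.
Qed.

(* Expectation of [F l] when the rounds [t, ..., t + n - 1] of [l] are drawn
   independently, equal to [vec v] with probability [w v], and all other
   rounds are [0]. *)
Fixpoint iid_expect (t n : nat) (F : loss_assignment R K -> R) : R :=
  if n is n'.+1 then
    \sum_v w v * iid_expect t.+1 n' (fun l => F (set_round l t (vec v)))
  else F (fun _ _ => 0).

Lemma eq_iid_expect t n F G :
  (forall l, F l = G l) -> iid_expect t n F = iid_expect t n G.
Proof.
elim: n t F G => [|n IH] t F G FG /=; first exact: FG.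
by apply: eq_bigr => v _; congr (_ * _); apply: IH => l; apply: FG.
Qed.

Lemma iid_expect_sum (I : finType) t n (F : I -> loss_assignment R K -> R) :
  iid_expect t n (fun l => \sum_i F i l) = \sum_i iid_expect t n (F i).
Proof.
elim: n t F => [|n IH] t F //=.
rewrite exchange_big; apply: eq_bigr => v _.
by rewrite (IH _ (fun i l => F i (set_round l t (vec v)))) mulr_sumr.
Qed.

Lemma iid_expectD t n F G :
  iid_expect t n (fun l => F l + G l) = iid_expect t n F + iid_expect t n G.
Proof.
elim: n t F G => [|n IH] t F G //=.
by rewrite -big_split; apply: eq_bigr => v _; rewrite IH mulrDr.
Qed.

Lemma iid_expectZ t n a F :
  iid_expect t n (fun l => a * F l) = a * iid_expect t n F.
Proof.
elim: n t F => [|n IH] t F //=.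
rewrite mulr_sumr; apply: eq_bigr => v _.
by rewrite (IH _ (fun l => F (set_round l t (vec v)))) mulrCA.
Qed.

Lemma iid_expectB t n F G :
  iid_expect t n (fun l => F l - G l) = iid_expect t n F - iid_expect t n G.
Proof.
rewrite -mulN1r -iid_expectZ -iid_expectD.
by apply: eq_iid_expect => l; rewrite mulN1r.
Qed.

Hypothesis w_ge0 : forall v, 0 <= w v.
Hypothesis w_sum1 : \sum_v w v = 1.

Lemma iid_expect_cst t n c : iid_expect t n (fun _ => c) = c.
Proof.
elim: n t => [|n IH] t //=.
under eq_bigr => v _ do rewrite IH.
by rewrite -mulr_suml w_sum1 mul1r.
Qed.

Lemma iid_expect_window j t n a :
  iid_expect t n (fun l => a + \sum_(i < n) l (t + i)%N j) =
  a + n%:R * \sum_v w v * vec v j.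
Proof.
elim: n t a => [|n IH] t a /=; first by rewrite big_ord0 mul0r !addr0.
transitivity (\sum_v w v * (a + vec v j + n%:R * \sum_v w v * vec v j)).
  apply: eq_bigr => v _; congr (_ * _); rewrite -(IH t.+1).
  by apply: eq_iid_expect => l; rewrite sum_window_set_round addrA.
set m := \sum_v w v * vec v j.
under eq_bigr => v _ do rewrite !mulrDr.
rewrite !big_split /= -!mulr_suml w_sum1 -[n.+1]addn1 natrD -/m; ring.
Qed.

Lemma iid_expect_cum_loss j n :
  iid_expect 0 n (fun l => cum_loss l n j) = n%:R * \sum_v w v * vec v j.
Proof.
rewrite -[RHS]add0r -(iid_expect_window _ 0).
by apply: eq_iid_expect => l; rewrite add0r.
Qed.

Variable P : loss_assignment R K -> Prop.
Hypothesis P0 : P (fun _ _ => 0).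
Hypothesis P_set_round : forall l t v, P l -> P (set_round l t (vec v)).

Lemma ler_iid_expect t n F G :
  (forall l, P l -> F l <= G l) -> iid_expect t n F <= iid_expect t n G.
Proof.
elim: n t F G => [|n IH] t F G FG /=; first exact: FG.
apply: ler_sum => v _; apply: ler_wpM2l => //; apply: IH => l Pl.
exact/FG/P_set_round.
Qed.

Lemma exists_ge_iid_expect t n F : exists l, P l /\ iid_expect t n F <= F l.
Proof.
elim: n t F => [|n IH] t F /=; first by exists (fun _ _ => 0).
have [v Fv] := exists_ge_avg
  (fun v => iid_expect t.+1 n (fun l => F (set_round l t (vec v)))) w_ge0 w_sum1.
have [l [Pl Fl]] := IH t.+1 (fun l => F (set_round l t (vec v))).
by exists (set_round l t (vec v)); split; [exact: P_set_round | exact: le_trans Fl].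
Qed.

End IidAdversary.

Section FeedbackGame.
Variables (R : realType) (K : nat) (O : Type).
Variable obs : 'I_K -> ('I_K -> R) -> O.

(* The learner observes [obs i x] after playing [i] against the loss vector
   [x]: [x i] under bandit feedback, [x] under full information. *)
Fixpoint feedback_value (A : seq ('I_K * O) -> 'I_K -> R)
    (l : loss_assignment R K) (n : nat) (h : seq ('I_K * O)) : R :=
  if n is n'.+1 then \sum_(i < K) A h i *
    (l (size h) i + feedback_value A l n' (rcons h (i, obs i (l (size h)))))
  else 0.

Lemma eq_feedback_value_from A l l' n h :
  (forall s, (size h <= s)%N -> l s = l' s) ->
  feedback_value A l n h = feedback_value A l' n h.
Proof.
elim: n h => [|n IH] h ll' //=; apply: eq_bigr => i _.
rewrite ll' // (IH (rcons h (i, obs i (l' (size h))))) // => s.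
by rewrite size_rcons => /ltnW; apply: ll'.
Qed.

Lemma iid_expect_feedback_value (V : finType) (w : V -> R) (vec : V -> 'I_K -> R) A n h :
  \sum_v w v = 1 -> (forall i, \sum_v w v * vec v i = 0) ->
  iid_expect w vec (size h) n (fun l => feedback_value A l n h) = 0.
Proof.
move=> w_sum1 mean0; elim: n h => [|n IH] h //=.
(* The arm played at round [size h] is independent of the losses of that round. *)
transitivity (\sum_v w v * \sum_i A h i * vec v i); last first.
  under eq_bigr => v _ do rewrite mulr_sumr.
  rewrite exchange_big big1 //= => i _.
  under eq_bigr => v _ do rewrite mulrCA.
  by rewrite -mulr_sumr mean0 mulr0.
apply: eq_bigr => v _; congr (_ * _).
rewrite (eq_iid_expect _ _ _ _ (G := fun l => \sum_i A h i *
    (vec v i + feedback_value A l n (rcons h (i, obs i (vec v)))))); last first.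
  move=> l; apply: eq_bigr => i _; rewrite set_round_eq.
  congr (_ * (_ + _)); apply: eq_feedback_value_from => s.
  by rewrite size_rcons; apply: set_round_gt.
rewrite iid_expect_sum; apply: eq_bigr => i _.
rewrite iid_expectZ iid_expectD iid_expect_cst //.
by rewrite -(size_rcons h (i, obs i (vec v))) IH addr0.
Qed.

End FeedbackGame.

Lemma bandit_valueE (R : realType) K (A : bandit_learner R K) l n h :
  bandit_value A l n h = feedback_value (fun i x => x i) A l n h.
Proof. by elim: n h => //= n IH h; apply: eq_bigr => i _; rewrite IH. Qed.

Lemma full_valueE (R : realType) K (A : full_learner R K) l n h :
  full_value A l n h = feedback_value (fun _ x => x) A l n h.
Proof. by elim: n h => //= n IH h; apply: eq_bigr => i _; rewrite IH. Qed.

Section Inequalities.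
Variable R : realType.

Lemma mul_le_amgm (a b lam : R) : 0 < lam ->
  a * b <= (lam * a ^+ 2 + b ^+ 2 / lam) / 2.
Proof.
move=> lam_gt0; rewrite -subr_ge0.
have -> : (lam * a ^+ 2 + b ^+ 2 / lam) / 2 - a * b = (lam * a - b) ^+ 2 / (2 * lam).
  by field; rewrite gt_eqF.
by rewrite divr_ge0 ?sqr_ge0 // mulr_ge0 // ltW.
Qed.

Lemma mul_ratio_sub1_le (r F n lam : R) : 0 < r -> 0 <= F <= n -> 0 < lam ->
  (r - 1) * F <=
  n / 2 * (lam * (Num.sqrt r - 1) ^+ 2 + (Num.sqrt r + 1) ^+ 2 / lam).
Proof.
move=> r_gt0 /andP[F_ge0 F_le] lam_gt0; set u := Num.sqrt r.
have n_ge0 : 0 <= n := le_trans F_ge0 F_le.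
have u1_ge0 : 0 <= u + 1 by rewrite addr_ge0 ?sqrtr_ge0.
have r_sub1 : r - 1 = (u - 1) * (u + 1) by rewrite -subr_sqr expr1n sqr_sqrtr ?ltW.
have le_norm : (r - 1) * F <= `|u - 1| * (u + 1) * n.
  rewrite -(ger0_norm u1_ge0) -normrM -r_sub1.
  apply: le_trans (ler_wpM2l (normr_ge0 _) F_le).
  by apply: ler_wpM2r => //; apply: ler_norm.
have amgm := mul_le_amgm `|u - 1| (u + 1) lam_gt0.
rewrite (real_normK (num_real _)) in amgm.
have := ler_wpM2l n_ge0 amgm; lra.
Qed.

Lemma ln_le_sub1 (y : R) : 0 < y -> ln y <= y - 1.
Proof.
move=> y_gt0; have := @le_ln1Dx R (y - 1).
by rewrite addrCA subrr addr0; apply; lra.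
Qed.

Lemma ln_le_sqrt_sub1 (y : R) : 0 < y -> ln y <= 2 * (Num.sqrt y - 1).
Proof.
move=> y_gt0; have u_gt0 : 0 < Num.sqrt y by rewrite sqrtr_gt0.
rewrite -{1}(sqr_sqrtr (ltW y_gt0)) expr2 lnM ?posrE //.
by have := ln_le_sub1 u_gt0; lra.
Qed.

Lemma ln_prod (I : Type) (s : seq I) (f : I -> R) :
  (forall i, 0 < f i) -> ln (\prod_(i <- s) f i) = \sum_(i <- s) ln (f i).
Proof.
move=> f_gt0; elim: s => [|i s IH]; first by rewrite !big_nil ln1.
by rewrite !big_cons lnM ?IH // posrE // prodr_gt0.
Qed.

Lemma kl_coin_le (d : R) : 0 <= d -> d ^+ 2 <= 1 / 2 ->
  1 / 2 * - ln (1 - d) + 1 / 2 * - ln (1 + d) <= d ^+ 2.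
Proof.
move=> d_ge0 d2_le; set q := 1 - d ^+ 2.
have q_ge : 1 / 2 <= q by rewrite /q; lra.
have d_lt1 : d < 1 by nra.
have q_gt0 : 0 < q by lra.
have -> : 1 / 2 * - ln (1 - d) + 1 / 2 * - ln (1 + d) = - ln q / 2.
  have -> : q = (1 - d) * (1 + d) by rewrite /q; ring.
  by rewrite lnM ?posrE; [ring | lra | lra].
have qV_gt0 : 0 < q^-1 by rewrite invr_gt0.
have := ln_le_sub1 qV_gt0; rewrite lnV ?posrE //.
have : q^-1 <= 1 + 2 * d ^+ 2.
  by rewrite -[q^-1]mul1r ler_pdivrMr // mulrC /q; nra.
lra.
Qed.

Section ChangeOfMeasure.
Variables (I : eqType) (r : seq I) (W rho : I -> R).
Hypothesis W_ge0 : forall s, 0 <= W s.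
Hypothesis rho_gt0 : forall s, 0 < rho s.
Hypothesis W_sum1 : \sum_(s <- r) W s = 1.
Hypothesis Wrho_sum1 : \sum_(s <- r) W s * rho s = 1.

Lemma sum_sqrt_ratioD_sqr (c : R) :
  \sum_(s <- r) W s * (Num.sqrt (rho s) + c) ^+ 2 =
  1 + c ^+ 2 + 2 * c * \sum_(s <- r) W s * Num.sqrt (rho s).
Proof.
transitivity (\sum_(s <- r)
    (W s * rho s + 2 * c * (W s * Num.sqrt (rho s)) + c ^+ 2 * W s)).
  by apply: eq_bigr => s _; rewrite sqrrD sqr_sqrtr ?(ltW (rho_gt0 s)) //; ring.
by rewrite !big_split /= -!mulr_sumr Wrho_sum1 W_sum1; ring.
Qed.

Lemma hellinger_le_kl :
  \sum_(s <- r) W s * (Num.sqrt (rho s) - 1) ^+ 2 <= \sum_(s <- r) W s * - ln (rho s).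
Proof.
have -> : \sum_(s <- r) W s * (Num.sqrt (rho s) - 1) ^+ 2 =
    \sum_(s <- r) W s * (2 * (1 - Num.sqrt (rho s))) + \sum_(s <- r) W s * (rho s - 1).
  rewrite -big_split; apply: eq_bigr => s _ /=.
  by rewrite sqrrB sqr_sqrtr ?(ltW (rho_gt0 s)) //; ring.
under [X in _ + X]eq_bigr => s _ do rewrite mulrBr mulr1.
rewrite sumrB Wrho_sum1 W_sum1 subrr addr0; apply: ler_sum => s _.
by rewrite ler_wpM2l //; have := ln_le_sqrt_sub1 (rho_gt0 s); lra.
Qed.

(* Going from the law [W] to the law [W * rho] changes the mean of a
   statistic with values in [[0, n]] by an amount controlled by the
   Kullback-Leibler divergence, through the Hellinger distance. *)
Lemma change_of_measure_le (F : I -> R) (n lam : R) :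
  {in r, forall s, 0 <= F s <= n} -> 0 < lam ->
  \sum_(s <- r) W s * rho s * F s - \sum_(s <- r) W s * F s <=
  n / 2 * (lam * \sum_(s <- r) W s * - ln (rho s) + 4 / lam).
Proof.
move=> F_bd lam_gt0.
have n_ge0 : 0 <= n.
  case: r F_bd W_sum1 => [|s r'] F_bd'.
    by rewrite big_nil => /eqP; rewrite eq_sym oner_eq0.
  by have /andP[F_ge0 F_le] := F_bd' s (mem_head s r'); rewrite (le_trans F_ge0).
apply: (@le_trans _ _ (\sum_(s <- r) W s * (n / 2 *
    (lam * (Num.sqrt (rho s) - 1) ^+ 2 + (Num.sqrt (rho s) + 1) ^+ 2 / lam)))).
  rewrite -sumrB big_seq [leRHS]big_seq; apply: ler_sum => s s_r.
  have -> : W s * rho s * F s - W s * F s = W s * ((rho s - 1) * F s) by ring.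
  by rewrite ler_wpM2l // (mul_ratio_sub1_le (rho_gt0 s) (F_bd s s_r) lam_gt0).
rewrite (eq_bigr (fun s => n / 2 * lam * (W s * (Num.sqrt (rho s) - 1) ^+ 2)
    + n / 2 / lam * (W s * (Num.sqrt (rho s) + 1) ^+ 2))); last by move=> s _; ring.
rewrite big_split /= -!mulr_sumr.
have hell_ge0 : 0 <= \sum_(s <- r) W s * (Num.sqrt (rho s) - 1) ^+ 2.
  by rewrite sumr_ge0 // => s _; rewrite mulr_ge0 ?sqr_ge0.
have hellD : \sum_(s <- r) W s * (Num.sqrt (rho s) + 1) ^+ 2 <= 4.
  by have := sum_sqrt_ratioD_sqr (- 1); have := sum_sqrt_ratioD_sqr 1; lra.
have c_ge0 : 0 <= n / 2 * lam by rewrite mulr_ge0 ?divr_ge0 // ltW.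
have c'_ge0 : 0 <= n / 2 / lam by rewrite !divr_ge0 // ltW.
have := ler_wpM2l c_ge0 hellinger_le_kl; have := ler_wpM2l c'_ge0 hellD.
have -> : n / 2 * (lam * \sum_(s <- r) W s * - ln (rho s) + 4 / lam) =
  n / 2 * lam * \sum_(s <- r) W s * - ln (rho s) + n / 2 / lam * 4 by ring.
lra.
Qed.

End ChangeOfMeasure.

Lemma quartic_le_norm (y al : R) : 0 < al ->
  y ^+ 2 / (2 * al) - y ^+ 4 / (18 * al ^+ 3) <= `|y|.
Proof.
move=> al_gt0; set z := `|y|; have z_ge0 : 0 <= z := normr_ge0 y.
have y2 : y ^+ 2 = z ^+ 2 by rewrite real_normK ?num_real.
have -> : y ^+ 4 = z ^+ 4 by rewrite -[4%N]/(2 * 2)%N !exprM y2.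
rewrite y2 -subr_ge0.
have -> : z - (z ^+ 2 / (2 * al) - z ^+ 4 / (18 * al ^+ 3)) =
    z * (z * (z - 3 * al) ^+ 2 + 6 * al * (z - 3 / 2 * al) ^+ 2 + 9 / 2 * al ^+ 3)
    / (18 * al ^+ 3).
  by field; rewrite gt_eqF.
have al_ge0 := ltW al_gt0.
apply: divr_ge0; last by rewrite mulr_ge0 // exprn_ge0.
apply: mulr_ge0 => //; apply: addr_ge0; first apply: addr_ge0.
- by rewrite mulr_ge0 ?sqr_ge0.
- by rewrite mulr_ge0 ?sqr_ge0 // mulr_ge0.
- by rewrite mulr_ge0 ?exprn_ge0 // divr_ge0.
Qed.

Lemma quartic_le_negpart (y al : R) : 0 < al ->
  - 1 / 2 * y + 1 / (4 * al) * y ^+ 2 + - 1 / (36 * al ^+ 3) * y ^+ 4 <=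
  Num.max (- y) 0.
Proof.
move=> al_gt0; have := quartic_le_norm y al_gt0.
have -> : - 1 / 2 * y + 1 / (4 * al) * y ^+ 2 + - 1 / (36 * al ^+ 3) * y ^+ 4 =
    (y ^+ 2 / (2 * al) - y ^+ 4 / (18 * al ^+ 3) - y) / 2.
  by field; rewrite gt_eqF.
have : `|y| - y <= 2 * Num.max (- y) 0.
  by case: (lerP 0 y) => y0;
    [rewrite ger0_norm // max_r | rewrite ltr0_norm // max_l]; lra.
lra.
Qed.

End Inequalities.

Section RandomWalk.
Variables (R : realType) (e : R).

(* [walk_expect n a g] is the expectation of [g (a + e * (s_1 + ... + s_n))]
   for independent fair signs [s_k]. *)
Fixpoint walk_expect (n : nat) (a : R) (g : R -> R) : R :=
  if n is n'.+1 then (walk_expect n' (a + e) g + walk_expect n' (a - e) g) / 2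
  else g a.

Lemma ler_walk_expect n a (g h : R -> R) :
  (forall y, g y <= h y) -> walk_expect n a g <= walk_expect n a h.
Proof.
move=> gh; elim: n a => [|n IH] a /=; first exact: gh.
by rewrite ler_pM2r ?invr_gt0 // lerD ?IH.
Qed.

Lemma walk_expect_ge0 n a (g : R -> R) :
  (forall y, 0 <= g y) -> 0 <= walk_expect n a g.
Proof.
move=> g_ge0; elim: n a => [|n IH] a /=; first exact: g_ge0.
by rewrite divr_ge0 ?addr_ge0 ?IH.
Qed.

Lemma walk_expect_quartic n a (c1 c2 c4 : R) :
  walk_expect n a (fun y => c1 * y + c2 * y ^+ 2 + c4 * y ^+ 4) =
  c1 * a + c2 * (a ^+ 2 + n%:R * e ^+ 2) + c4 * (a ^+ 4
    + 6 * n%:R * e ^+ 2 * a ^+ 2 + (3 * n%:R ^+ 2 - 2 * n%:R) * e ^+ 4).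
Proof.
elim: n a => [|n IH] a /=; first by ring.
by rewrite !IH -[n.+1]addn1 natrD; field.
Qed.

Lemma walk_expect_negpart_ge n : 0 <= e ->
  e * Num.sqrt n%:R / 6 <= walk_expect n 0 (fun y => Num.max (- y) 0).
Proof.
move=> e_ge0; set al := e * Num.sqrt n%:R.
have [al_le0 | al_gt0] := lerP al 0.
  have negpart_ge0 (y : R) : 0 <= Num.max (- y) 0 by rewrite le_max lexx orbT.
  by apply: le_trans (walk_expect_ge0 _ _ negpart_ge0); lra.
apply: le_trans (ler_walk_expect _ _ (fun y => quartic_le_negpart y al_gt0)).
have al2 : al ^+ 2 = n%:R * e ^+ 2 by rewrite exprMn sqr_sqrtr ?ler0n // mulrC.
have moment4 : (3 * n%:R ^+ 2 - 2 * n%:R) * e ^+ 4 <= 3 * al ^+ 4.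
  rewrite -[4%N]/(2 * 2)%N !exprM al2.
  have : 0 <= 2 * n%:R * (e ^+ 2) ^+ 2 by rewrite !mulr_ge0 ?exprn_ge0.
  lra.
rewrite walk_expect_quartic !expr0n /= !mulr0 !add0r -al2.
have al3_gt0 : 0 < al ^+ 3 by rewrite exprn_gt0.
have c_ge0 : 0 <= 1 / (36 * al ^+ 3) by rewrite divr_ge0 // mulr_ge0 // ltW.
have := ler_wpM2l c_ge0 moment4.
have -> : 1 / (36 * al ^+ 3) * (3 * al ^+ 4) = al / 12 by field; rewrite gt_eqF.
have -> : 1 / (4 * al) * al ^+ 2 = al / 4 by field; rewrite gt_eqF.
lra.
Qed.

End RandomWalk.

Section CoinBandit.
Variables (R : realType) (K : nat) (A : bandit_learner R K).
Variable x : 'I_K -> bool -> R.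

(* Arm [i] incurs the loss [x i b], where the bit [b] is the outcome of a coin
   attached to [i]; a path lists the arms played with the bits observed. *)
Definition coin_history (p : seq ('I_K * bool)) : bandit_history R K :=
  [seq (c.1, x c.1 c.2) | c <- p].

Lemma size_coin_history p : size (coin_history p) = size p.
Proof. exact: size_map. Qed.

Lemma coin_history_rcons p c :
  coin_history (rcons p c) = rcons (coin_history p) (c.1, x c.1 c.2).
Proof. exact: map_rcons. Qed.

(* Expected total of [f] over the next [n] rounds when the coin of the played
   arm [i] lands on [b] with probability [pi i b]. *)
Fixpoint coin_value (pi f : 'I_K -> bool -> R) (n : nat)
    (p : seq ('I_K * bool)) : R :=
  if n is n'.+1 then \sum_(i < K) A (coin_history p) i *
    \sum_(b : bool) pi i b * (f i b + coin_value pi f n' (rcons p (i, b)))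
  else 0.

Lemma eq_coin_value_mean (pi f g : 'I_K -> bool -> R) n p :
  (forall i, \sum_(b : bool) pi i b * f i b = \sum_(b : bool) pi i b * g i b) ->
  coin_value pi f n p = coin_value pi g n p.
Proof.
move=> fg; elim: n p => [|n IH] p //=; apply: eq_bigr => i _; congr (_ * _).
rewrite (eq_bigr (fun b => pi i b * f i b + pi i b * coin_value pi g n (rcons p (i, b)))).
  by rewrite big_split /= fg -big_split; apply: eq_bigr => b _; rewrite mulrDr.
by move=> b _; rewrite IH mulrDr.
Qed.

Lemma coin_valueZ (pi f : 'I_K -> bool -> R) a n p :
  coin_value pi (fun i b => a * f i b) n p = a * coin_value pi f n p.
Proof.
elim: n p => [|n IH] p /=; first by rewrite mulr0.
rewrite mulr_sumr; apply: eq_bigr => i _; rewrite mulrCA; congr (_ * _).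
by rewrite mulr_sumr; apply: eq_bigr => b _; rewrite IH; ring.
Qed.

Definition coins_prob (pi : 'I_K -> bool -> R) (s : {ffun 'I_K -> bool}) : R :=
  \prod_k pi k (s k).

Definition coins_loss (s : {ffun 'I_K -> bool}) : 'I_K -> R := fun i => x i (s i).

Section CoinLaw.
Variable pi : 'I_K -> bool -> R.
Hypothesis pi_ge0 : forall i b, 0 <= pi i b.
Hypothesis pi_sum1 : forall i, \sum_(b : bool) pi i b = 1.

Lemma coins_prob_ge0 s : 0 <= coins_prob pi s.
Proof. exact: prodr_ge0. Qed.

Lemma coins_prob_sum1 : \sum_s coins_prob pi s = 1.
Proof. by rewrite /coins_prob -bigA_distr_bigA big1. Qed.

Lemma coins_prob_marginal i (g : bool -> R) :
  \sum_s coins_prob pi s * g (s i) = \sum_(b : bool) pi i b * g b.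
Proof.
pose F k b := if k == i then pi k b * g b else pi k b.
transitivity (\sum_(s : {ffun 'I_K -> bool}) \prod_k F k (s k)).
  apply: eq_bigr => s _; rewrite /coins_prob (bigD1 i) // [RHS](bigD1 i) //=.
  rewrite /F eqxx mulrAC; congr (_ * _).
  by apply: eq_bigr => k /negbTE ->.
rewrite -(bigA_distr_bigA F) (bigD1 i) //= [X in _ * X]big1 ?mulr1 => [|k /negbTE k_i].
  by apply: eq_bigr => b _; rewrite /F eqxx.
by rewrite -(pi_sum1 k); apply: eq_bigr => b _; rewrite /F k_i.
Qed.

Lemma iid_expect_coin_value n p :
  iid_expect (coins_prob pi) coins_loss (size p) n
    (fun l => bandit_value A l n (coin_history p)) = coin_value pi x n p.
Proof.
elim: n p => [|n IH] p //=.
transitivity (\sum_s coins_prob pi s *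
    \sum_i A (coin_history p) i * (x i (s i) + coin_value pi x n (rcons p (i, s i)))).
  apply: eq_bigr => s _; congr (_ * _).
  rewrite (eq_iid_expect _ _ _ _ (G := fun l => \sum_i A (coin_history p) i *
      (x i (s i) + bandit_value A l n (coin_history (rcons p (i, s i)))))); last first.
    move=> l /=; apply: eq_bigr => i _.
    rewrite size_coin_history set_round_eq coin_history_rcons.
    congr (_ * (_ + _)); rewrite !bandit_valueE; apply: eq_feedback_value_from => t.
    by rewrite size_rcons size_coin_history; apply: set_round_gt.
  rewrite iid_expect_sum; apply: eq_bigr => i _.
  rewrite iid_expectZ iid_expectD iid_expect_cst ?coins_prob_sum1 //.
  by rewrite -(size_rcons p (i, s i)) IH.
rewrite [LHS](eq_bigr _ (fun s _ => mulr_sumr _ _ _ _)) [LHS]exchange_big /=.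
apply: eq_bigr => i _; under eq_bigr => s _ do rewrite mulrCA.
rewrite -mulr_sumr.
by rewrite (coins_prob_marginal i (fun b => x i b + coin_value pi x n (rcons p (i, b)))).
Qed.

End CoinLaw.

Section Paths.
Hypothesis A_distr : valid_bandit_learner A.

Fixpoint paths (n : nat) : seq (seq ('I_K * bool)) :=
  if n is n'.+1 then
    flatten [seq [seq c :: s | s <- paths n'] | c <- index_enum ('I_K * bool)%type]
  else [:: [::]].

Fixpoint path_weight (pi : 'I_K -> bool -> R) (p s : seq ('I_K * bool)) : R :=
  if s is c :: s' then A (coin_history p) c.1 * pi c.1 c.2 * path_weight pi (rcons p c) s'
  else 1.

Definition path_sum (f : 'I_K -> bool -> R) (s : seq ('I_K * bool)) : R :=
  \sum_(c <- s) f c.1 c.2.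

Lemma big_paths_succ n (F : seq ('I_K * bool) -> R) :
  \sum_(s <- paths n.+1) F s =
  \sum_(i < K) \sum_(b : bool) \sum_(s <- paths n) F ((i, b) :: s).
Proof.
rewrite /= big_flatten /= big_map pair_bigA /=.
by apply: eq_bigr => -[i b] _; rewrite big_map.
Qed.

Lemma size_paths n s : s \in paths n -> size s = n.
Proof.
elim: n s => [|n IH] s /=; first by rewrite inE => /eqP->.
by case/flattenP => _ /mapP[c _ ->] /mapP[s' s'_n ->] /=; rewrite IH.
Qed.

Lemma path_weight_ge0 pi p s : (forall i b, 0 <= pi i b) -> 0 <= path_weight pi p s.
Proof.
move=> pi_ge0; elim: s p => [|c s IH] p //=.
by rewrite !mulr_ge0 //; apply: (A_distr _).1.
Qed.

Lemma path_weight_sum1 pi n p : (forall i, \sum_(b : bool) pi i b = 1) ->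
  \sum_(s <- paths n) path_weight pi p s = 1.
Proof.
move=> pi_sum1; elim: n p => [|n IH] p; first by rewrite big_seq1.
rewrite big_paths_succ -(A_distr (coin_history p)).2; apply: eq_bigr => i _.
rewrite -[RHS]mulr1 -(pi_sum1 i) mulr_sumr; apply: eq_bigr => b _ /=.
by rewrite -mulr_sumr IH mulr1.
Qed.

Lemma path_weight_ratio pi pi' (rho : 'I_K * bool -> R) p s :
  (forall i b, pi' i b = pi i b * rho (i, b)) ->
  path_weight pi' p s = path_weight pi p s * \prod_(c <- s) rho c.
Proof.
move=> pi'E; elim: s p => [|[i b] s IH] p /=; first by rewrite big_nil mulr1.
by rewrite IH big_cons pi'E; ring.
Qed.

Lemma coin_valueE pi f n p : (forall i, \sum_(b : bool) pi i b = 1) ->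
  coin_value pi f n p = \sum_(s <- paths n) path_weight pi p s * path_sum f s.
Proof.
move=> pi_sum1; elim: n p => [|n IH] p; first by rewrite big_seq1 /path_sum big_nil mulr0.
rewrite big_paths_succ /=; apply: eq_bigr => i _.
rewrite mulr_sumr; apply: eq_bigr => b _ /=.
set q := rcons p (i, b).
have -> : \sum_(s <- paths n) A (coin_history p) i * pi i b * path_weight pi q s *
    path_sum f ((i, b) :: s) = A (coin_history p) i * pi i b *
    (f i b * \sum_(s <- paths n) path_weight pi q s +
     \sum_(s <- paths n) path_weight pi q s * path_sum f s).
  rewrite mulr_sumr -big_split mulr_sumr; apply: eq_bigr => s _ /=.
  by rewrite /path_sum big_cons /=; ring.
by rewrite path_weight_sum1 // mulr1 -IH mulrA.
Qed.

Lemma coin_value_sum (J : finType) pi (F : J -> 'I_K -> bool -> R) n p :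
  (forall i, \sum_(b : bool) pi i b = 1) ->
  coin_value pi (fun i b => \sum_j F j i b) n p = \sum_j coin_value pi (F j) n p.
Proof.
move=> pi_sum1; rewrite coin_valueE //.
under [RHS]eq_bigr => j _ do rewrite coin_valueE //.
rewrite exchange_big; apply: eq_bigr => s _.
by rewrite /path_sum exchange_big mulr_sumr.
Qed.

Lemma coin_value_cst pi c n p : (forall i, \sum_(b : bool) pi i b = 1) ->
  coin_value pi (fun _ _ => c) n p = n%:R * c.
Proof.
move=> pi_sum1; rewrite coin_valueE // big_seq.
rewrite (eq_bigr (fun s => path_weight pi p s * (n%:R * c))) => [|s /size_paths <-].
  by rewrite -big_seq -mulr_suml path_weight_sum1 // mul1r.
by rewrite /path_sum big_const_seq count_predT -Monoid.iteropE /= mulr_natl.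
Qed.

Lemma coin_value_ge0 pi f n p :
  (forall i b, 0 <= pi i b) -> (forall i, \sum_(b : bool) pi i b = 1) ->
  (forall i b, 0 <= f i b) -> 0 <= coin_value pi f n p.
Proof.
move=> pi_ge0 pi_sum1 f_ge0; rewrite coin_valueE //.
by rewrite sumr_ge0 // => s _; rewrite mulr_ge0 ?path_weight_ge0 ?sumr_ge0.
Qed.

Lemma coin_value_change pi pi' (rho : 'I_K * bool -> R) f n p lam :
  (forall i b, 0 <= pi i b) -> (forall i, \sum_(b : bool) pi i b = 1) ->
  (forall i, \sum_(b : bool) pi' i b = 1) ->
  (forall c, 0 < rho c) -> (forall i b, pi' i b = pi i b * rho (i, b)) ->
  (forall i b, 0 <= f i b <= 1) -> 0 < lam ->
  coin_value pi' f n p - coin_value pi f n p <=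
  n%:R / 2 * (lam * coin_value pi (fun i b => - ln (rho (i, b))) n p + 4 / lam).
Proof.
move=> pi_ge0 pi_sum1 pi'_sum1 rho_gt0 pi'E f_bd lam_gt0; rewrite !coin_valueE //.
have prod_gt0 s : 0 < \prod_(c <- s) rho c by rewrite prodr_gt0.
have path_sum_bd : {in paths n, forall s, 0 <= path_sum f s <= n%:R}.
  move=> s /size_paths <-; rewrite -sum1_size natr_sum.
  by rewrite sumr_ge0 ?ler_sum // => c _; case/andP: (f_bd c.1 c.2).
have Wrho_sum1 : \sum_(s <- paths n) path_weight pi p s * \prod_(c <- s) rho c = 1.
  rewrite -[RHS](path_weight_sum1 n p pi'_sum1); apply: eq_bigr => s _.
  by rewrite (path_weight_ratio _ _ pi'E).
rewrite (eq_bigr (fun s => path_weight pi p s * \prod_(c <- s) rho c * path_sum f s));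
  last by move=> s _; rewrite (path_weight_ratio _ _ pi'E).
have -> : \sum_(s <- paths n) path_weight pi p s * path_sum (fun i b => - ln (rho (i, b))) s
    = \sum_(s <- paths n) path_weight pi p s * - ln (\prod_(c <- s) rho c).
  apply: eq_bigr => s _; rewrite ln_prod // /path_sum -sumrN.
  by congr (_ * _); apply: eq_bigr => -[i b].
have change := change_of_measure_le (fun s => path_weight_ge0 p s pi_ge0) prod_gt0
  (path_weight_sum1 n p pi_sum1) Wrho_sum1 path_sum_bd lam_gt0.
exact: change.
Qed.

End Paths.
End CoinBandit.

Definition eps_bounded (R : realType) K (eps : 'I_K -> R) (l : loss_assignment R K) :=
  forall t j, `|l t j| <= eps j.

Lemma eps_bounded_set_round (R : realType) K (eps : 'I_K -> R) l t x :
  eps_bounded eps l -> (forall i, `|x i| <= eps i) -> eps_bounded eps (set_round l t x).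
Proof. by move=> l_bd x_bd s i; rewrite /set_round; case: (s == t). Qed.

Section FairCoin.
Variable R : realType.

Definition fair (b : bool) : R := 1 / 2.

Lemma fair_ge0 b : 0 <= fair b.
Proof. by rewrite divr_ge0. Qed.

Lemma fair_sum1 : \sum_b fair b = 1.
Proof. by rewrite big_bool /= /fair; field. Qed.

End FairCoin.
Arguments fair {R} b.

Section SingleArm.
Variables (R : realType) (K : nat) (js : 'I_K) (e : R).

Definition flip_loss (b : bool) : 'I_K -> R :=
  fun i => if i == js then (if b then e else - e) else 0.

Lemma flip_loss_mean i : \sum_b fair b * flip_loss b i = 0.
Proof. by rewrite big_bool /= /fair /flip_loss; case: (i == js); ring. Qed.

Lemma iid_expect_flip_walk (g : R -> R) t n a :
  iid_expect fair flip_loss t n (fun l => g (a + \sum_(i < n) l (t + i)%N js)) =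
  walk_expect e n a g.
Proof.
elim: n t a => [|n IH] t a /=; first by rewrite big_ord0 addr0.
have step b : iid_expect fair flip_loss t.+1 n (fun l =>
    g (a + \sum_(i < n.+1) set_round l t (flip_loss b) (t + i)%N js)) =
    walk_expect e n (a + flip_loss b js) g.
  by rewrite -(IH t.+1); apply: eq_iid_expect => l; rewrite sum_window_set_round addrA.
by rewrite big_bool /= !step /fair /flip_loss eqxx; field.
Qed.

End SingleArm.

Section SingleArmRegret.
Variables (R : realType) (K T : nat) (eps : 'I_K -> R) (js k : 'I_K).
Hypothesis eps_ge0 : forall j, 0 <= eps j.
Hypothesis k_js : k != js.

Lemma single_arm_regret (val : loss_assignment R K -> R) :
  iid_expect fair (flip_loss js (eps js)) 0 T val = 0 ->
  exists l, eps_bounded eps l /\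
    eps js * Num.sqrt T%:R / 6 <= val l - min_over (cum_loss l T).
Proof.
move=> val0; pose P l := (forall s i, i != js -> l s i = 0) /\ eps_bounded eps l.
have P0 : P (fun _ _ => 0) by split=> // s i; rewrite normr0.
have P_set l t b : P l -> P (set_round l t (flip_loss js (eps js) b)).
  case=> l0 l_bd; split=> s i; rewrite /set_round; case: (s == t).
  - by rewrite /flip_loss => /negbTE ->.
  - exact: l0.
  - by rewrite /flip_loss; case: eqP => [->|_]; case: b; rewrite ?normrN ?normr0 ?ger0_norm.
  - exact: l_bd.
have [l [[_ l_bd] le_l]] := exists_ge_iid_expect (@fair_ge0 R) (fair_sum1 R) P0 P_set 0 T
  (fun l => val l - min_over (cum_loss l T)).
exists l; split=> //; apply: le_trans le_l.
(* The minimum is below the walk of arm [js] and below the zero loss of [k]. *)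
rewrite iid_expectB val0 sub0r -mulN1r -iid_expectZ.
apply: le_trans (walk_expect_negpart_ge T (eps_ge0 js)) _.
rewrite -(iid_expect_flip_walk js (eps js) (fun y => Num.max (- y) 0) 0 T 0).
apply: (ler_iid_expect (@fair_ge0 R) P0 P_set) => l' [l'0 _].
rewrite mulN1r ge_max lerN2 oppr_ge0 add0r; apply/andP; split.
  exact: le_trans (min_over_le _ js) (lexx _).
apply: le_trans (min_over_le _ k) _.
by rewrite /cum_loss big1 // => i _; apply: l'0.
Qed.

End SingleArmRegret.

Definition bandit_regret (R : realType) K (A : bandit_learner R K) l T :=
  bandit_expected_loss A l T - min_over (cum_loss l T).

Definition full_regret (R : realType) K (A : full_learner R K) l T :=
  full_expected_loss A l T - min_over (cum_loss l T).

Definition sign_loss (R : realType) K (eps : 'I_K -> R) i (b : bool) : R :=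
  if b then eps i else - eps i.

Definition pull {R : realType} K (j i : 'I_K) (b : bool) : R := (i == j)%:R.

Section BiasedAdversary.
Variables (R : realType) (K T : nat) (A : bandit_learner R K) (eps : 'I_K -> R).
Hypothesis A_distr : valid_bandit_learner A.

Definition fair_pulls j := coin_value A (sign_loss eps) (fun=> fair) (pull j) T [::].

Lemma fair_pulls_ge0 j : 0 <= fair_pulls j.
Proof.
apply: (coin_value_ge0 _ A_distr) => [i b|i|i b];
  [exact: fair_ge0 | exact: fair_sum1 | exact: ler0n].
Qed.

Lemma fair_pulls_sum : \sum_j fair_pulls j = T%:R.
Proof.
rewrite /fair_pulls -coin_value_sum // => [|i]; last exact: fair_sum1.
rewrite (@eq_coin_value_mean _ _ _ _ _ _ (fun _ _ => 1)) => [|i].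
  by rewrite coin_value_cst ?mulr1 // => i; apply: fair_sum1.
apply: eq_bigr => b _; congr (_ * _).
by rewrite /pull (bigD1 i) //= eqxx big1 ?addr0 // => k /negbTE; rewrite eq_sym => ->.
Qed.

Variables (j : 'I_K) (d : R).
Hypotheses (d_ge0 : 0 <= d) (d2_le : d ^+ 2 <= 1 / 2).

Definition coin_bias (i : 'I_K) (b : bool) : R :=
  if i == j then (if b then 1 - d else 1 + d) / 2 else fair b.

Definition bias_ratio (c : 'I_K * bool) : R :=
  if c.1 == j then (if c.2 then 1 - d else 1 + d) else 1.

Lemma bias_lt1 : d < 1.
Proof. by case: (lerP 1 d) => // d_ge1; move: d2_le; rewrite expr2; nra. Qed.

Lemma coin_bias_ge0 i b : 0 <= coin_bias i b.
Proof.
have := bias_lt1; have := d_ge0; rewrite /coin_bias /fair.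
by case: (i == j); case: b => /= d0 d1; apply: divr_ge0; lra.
Qed.

Lemma coin_bias_sum1 i : \sum_b coin_bias i b = 1.
Proof. by rewrite big_bool /= /coin_bias /fair; case: (i == j); field. Qed.

Lemma bias_ratio_gt0 c : 0 < bias_ratio c.
Proof.
have := bias_lt1; have := d_ge0; rewrite /bias_ratio.
by case: (c.1 == j); case: (c.2) => /= d0 d1; lra.
Qed.

Lemma coin_biasE i b : coin_bias i b = fair b * bias_ratio (i, b).
Proof. by rewrite /coin_bias /bias_ratio /fair /=; case: (i == j); case: b; field. Qed.

Lemma biased_pulls_le lam : 0 < lam ->
  coin_value A (sign_loss eps) coin_bias (pull j) T [::] <=
  fair_pulls j + T%:R / 2 * (lam * d ^+ 2 * fair_pulls j + 4 / lam).
Proof.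
move=> lam_gt0.
have pull_bd i b : 0 <= (pull j i b : R) <= 1.
  by rewrite /pull; case: (i == j); rewrite ?lexx ?ler01.
have := coin_value_change (sign_loss eps) A_distr T [::]
  (fun _ => @fair_ge0 R) (fun _ => fair_sum1 R) coin_bias_sum1 bias_ratio_gt0 coin_biasE
  pull_bd lam_gt0.
set kl := 1 / 2 * - ln (1 - d) + 1 / 2 * - ln (1 + d).
have -> : coin_value A (sign_loss eps) (fun=> fair)
    (fun i b => - ln (bias_ratio (i, b))) T [::] = kl * fair_pulls j.
  rewrite /fair_pulls -coin_valueZ; apply: eq_coin_value_mean => i.
  rewrite !big_bool /= /bias_ratio /pull /fair /=.
  by case: (i == j) => /=; rewrite ?ln1 /kl; field.
have kl_le : lam * kl * fair_pulls j <= lam * d ^+ 2 * fair_pulls j.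
  by rewrite ler_wpM2r ?fair_pulls_ge0 // ler_wpM2l ?kl_coin_le // ltW.
have T2_ge0 : 0 <= T%:R / 2 :> R by rewrite divr_ge0 ?ler0n.
have := ler_wpM2l T2_ge0 (lerD kl_le (lexx (4 / lam))).
rewrite -/(fair_pulls j); lra.
Qed.

Lemma biased_regret_ge lam : 0 <= eps j -> 0 < lam ->
  eps j * d * (T%:R - (fair_pulls j + T%:R / 2 * (lam * d ^+ 2 * fair_pulls j + 4 / lam)))
  <= iid_expect (coins_prob coin_bias) (coins_loss (sign_loss eps)) 0 T
       (fun l => bandit_regret A l T).
Proof.
move=> eps_ge0 lam_gt0; rewrite iid_expectB.
have -> : iid_expect (coins_prob coin_bias) (coins_loss (sign_loss eps)) 0 T
    (fun l => bandit_expected_loss A l T) =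
    - (eps j * d) * coin_value A (sign_loss eps) coin_bias (pull j) T [::].
  rewrite (iid_expect_coin_value A _ coin_bias_sum1 T [::]) -coin_valueZ.
  apply: eq_coin_value_mean => i; rewrite !big_bool /= /sign_loss /coin_bias /pull.
  by case: eqP => [->|_] /=; rewrite /fair; field.
have min_le : iid_expect (coins_prob coin_bias) (coins_loss (sign_loss eps)) 0 T
    (fun l => min_over (cum_loss l T)) <= T%:R * - (eps j * d).
  apply: le_trans (ler_iid_expect (coins_prob_ge0 coin_bias_ge0) (P := fun=> True) I
    (fun _ _ _ _ => I) 0 T (fun l _ => min_over_le (cum_loss l T) j)) _.
  rewrite iid_expect_cum_loss ?(coins_prob_sum1 coin_bias_sum1) //.
  rewrite (coins_prob_marginal coin_bias_sum1 j (sign_loss eps j)).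
  by rewrite big_bool /= /coin_bias /sign_loss eqxx; lra.
have := biased_pulls_le lam_gt0.
have ed_ge0 : 0 <= eps j * d := mulr_ge0 eps_ge0 d_ge0.
set P := coin_value _ _ _ _ _ _ => P_le.
have := ler_wpM2l ed_ge0 P_le; lra.
Qed.

End BiasedAdversary.

Section SpreadRegret.
Variables (R : realType) (K T : nat) (A : bandit_learner R K) (eps : 'I_K -> R).
Hypothesis A_distr : valid_bandit_learner A.
Hypothesis T_gt0 : (0 < T)%N.
Hypothesis eps_ge0 : forall j, 0 <= eps j.
Hypothesis eps_large :
  forall j, 0 < eps j -> 2 / T%:R * \sum_(i < K) eps i ^+ 2 <= eps j ^+ 2.
Hypothesis sum_gt0 : 0 < \sum_(i < K) eps i ^+ 2.
Hypothesis eps_small : forall j, 4 * eps j ^+ 2 <= \sum_(i < K) eps i ^+ 2.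

Let S := \sum_(i < K) eps i ^+ 2.
Let gap := Num.sqrt (T%:R * S) / (8 * T%:R).
(* The hidden arm [j] is drawn with probability [w j] and biased by [d j];
   [d j] is the junk value [0] when [eps j = 0], but then [w j = 0]. *)
Let w j := eps j ^+ 2 / S.
Let d j := gap / eps j.

Let E j := iid_expect (coins_prob (coin_bias j (d j))) (coins_loss (sign_loss eps)) 0 T
  (fun l => bandit_regret A l T).

Lemma natrT_gt0 : 0 < T%:R :> R.
Proof. by rewrite ltr0n. Qed.

Lemma gap_ge0 : 0 <= gap.
Proof. by rewrite divr_ge0 ?sqrtr_ge0 // mulr_ge0 // ltW natrT_gt0. Qed.

Lemma gap_sqr : gap ^+ 2 = S / (64 * T%:R).
Proof.
have T_gt0' := natrT_gt0; have S_gt0 : 0 < S := sum_gt0.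
rewrite expr_div_n sqr_sqrtr; first by field; rewrite gt_eqF.
by rewrite mulr_ge0 // ltW.
Qed.

Lemma gap_mulT : gap * T%:R = Num.sqrt (T%:R * S) / 8.
Proof. by have := natrT_gt0; rewrite /gap => T_gt0'; field; rewrite gt_eqF. Qed.

Lemma spread_bias_ge0 j : 0 <= d j.
Proof. by rewrite divr_ge0 ?gap_ge0. Qed.

Lemma spread_bias_sqr_le j : d j ^+ 2 <= 1 / 2.
Proof.
have [eps_gt0 | eps_le0] := ltrP 0 (eps j); last first.
  have eps0 : eps j = 0 by apply/le_anti; rewrite eps_le0 eps_ge0.
  by rewrite /d eps0 invr0 mulr0 expr0n /=; lra.
have T_gt0' := natrT_gt0; have S_gt0 : 0 < S := sum_gt0.
have := ler_wpM2l (ltW T_gt0') (eps_large eps_gt0).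
have -> : T%:R * (2 / T%:R * S) = 2 * S by field; rewrite gt_eqF.
rewrite /d expr_div_n gap_sqr !ler_pdivrMr ?exprn_gt0 ?mulr_gt0 //; lra.
Qed.

Let n j := fair_pulls T A eps j.

Lemma spread_weight_ge0 j : 0 <= w j.
Proof. by rewrite divr_ge0 ?sqr_ge0 // ltW. Qed.

Lemma spread_weight_sum1 : \sum_j w j = 1.
Proof. by rewrite -mulr_suml divff // gt_eqF. Qed.

Lemma spread_weight_le j : w j <= 1 / 4.
Proof. by rewrite ler_pdivrMr //; have := eps_small j; rewrite -/S; lra. Qed.

Lemma spread_weighted_regret_ge j :
  gap * (T%:R * w j - w j * n j - n j / 8 - T%:R * w j / 8) <= w j * E j.
Proof.
have n_ge0 : 0 <= n j := fair_pulls_ge0 T eps A_distr j.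
have [eps_gt0 | eps_le0] := ltrP 0 (eps j); last first.
  have eps0 : eps j = 0 by apply/le_anti; rewrite eps_le0 eps_ge0.
  have -> : w j = 0 by rewrite /w eps0 expr0n /= mul0r.
  by have := mulr_ge0 gap_ge0 n_ge0; lra.
have T_gt0' := natrT_gt0; have S_gt0 : 0 < S := sum_gt0.
have ed : eps j * d j = gap by rewrite /d mulrC divfK // gt_eqF.
have wd2 : w j * d j ^+ 2 = 1 / (64 * T%:R).
  by rewrite /w /d expr_div_n gap_sqr; field; rewrite !gt_eqF.
have := ler_wpM2l (spread_weight_ge0 j) (biased_regret_ge T A_distr
  (spread_bias_ge0 j) (spread_bias_sqr_le j) (eps_ge0 j) (ltr0n _ 16)).
have -> : w j * (eps j * d j * (T%:R - (fair_pulls T A eps j +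
    T%:R / 2 * (16%:R * d j ^+ 2 * fair_pulls T A eps j + 4 / 16%:R)))) =
    eps j * d j * (T%:R * w j - w j * n j
      - 8 * T%:R * (w j * d j ^+ 2) * n j - T%:R * w j / 8) by rewrite /n; field.
rewrite ed wd2 (_ : 8 * T%:R * (1 / (64 * T%:R)) = 1 / 8); first by rewrite /E; lra.
by field; rewrite gt_eqF.
Qed.

Lemma spread_avg_regret_ge : Num.sqrt (T%:R * S) / 16 <= \sum_j w j * E j.
Proof.
apply: le_trans (ler_sum _ (fun j _ => spread_weighted_regret_ge j)).
have wn_le : \sum_j w j * n j <= T%:R / 4.
  rewrite -(fair_pulls_sum T eps A_distr) mulr_suml ler_sum // => j _.
  by have := ler_wpM2l (fair_pulls_ge0 T eps A_distr j) (spread_weight_le j); rewrite /n; lra.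
rewrite -mulr_sumr !sumrB -!mulr_suml -mulr_sumr spread_weight_sum1.
rewrite (fair_pulls_sum T eps A_distr).
have slack : 0 <= T%:R / 4 - \sum_j w j * n j by lra.
by have := mulr_ge0 gap_ge0 slack; have := gap_mulT; lra.
Qed.

Lemma spread_regret :
  exists l, eps_bounded eps l /\ 1 / 16 * Num.sqrt (T%:R * S) <= bandit_regret A l T.
Proof.
have [j le_j] := exists_ge_avg E spread_weight_ge0 spread_weight_sum1.
have P_set l t s : eps_bounded eps l ->
    eps_bounded eps (set_round l t (coins_loss (sign_loss eps) s)).
  move=> l_bd; apply: eps_bounded_set_round => // i.
  by rewrite /coins_loss /sign_loss; case: (s i); rewrite ?normrN ger0_norm.
have P0 : eps_bounded eps (fun _ _ => 0) by move=> t i; rewrite normr0.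
have [l [l_bd le_l]] := exists_ge_iid_expect
  (coins_prob_ge0 (coin_bias_ge0 j (spread_bias_ge0 j) (spread_bias_sqr_le j)))
  (coins_prob_sum1 (coin_bias_sum1 j (d j))) P0 P_set 0 T (fun l => bandit_regret A l T).
exists l; split=> //; apply: le_trans le_l; apply: le_trans le_j.
by have := spread_avg_regret_ge; lra.
Qed.

End SpreadRegret.

Section LowerBounds.
Variables (R : realType) (K T : nat) (eps : 'I_K -> R) (js k : 'I_K).
Hypothesis eps_ge0 : forall j, 0 <= eps j.
Hypothesis k_js : k != js.
Hypothesis js_max : forall j, eps j ^+ 2 <= eps js ^+ 2.

Lemma full_regret_lower_bound (A : full_learner R K) : exists l, eps_bounded eps l /\
  1 / 16 * Num.sqrt (T%:R * \big[Num.max/0]_(j < K) eps j ^+ 2) <= full_regret A l T.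
Proof.
have [|l [l_bd le_l]] := single_arm_regret (T := T) eps_ge0 k_js
  (val := fun l => full_expected_loss A l T).
  rewrite /full_expected_loss; under eq_iid_expect => l do rewrite full_valueE.
  exact: (iid_expect_feedback_value _ A T [::] (fair_sum1 R) (flip_loss_mean js (eps js))).
exists l; split=> //; apply: le_trans le_l.
have -> : \big[Num.max/0]_(j < K) eps j ^+ 2 = eps js ^+ 2.
  apply/le_anti; rewrite le_bigmax andbT.
  by apply/bigmax_leP; split=> [|j _]; [exact: sqr_ge0 | exact: js_max].
rewrite sqrtrM ?ler0n // sqrtr_sqr ger0_norm //.
have := mulr_ge0 (eps_ge0 js) (sqrtr_ge0 T%:R); lra.
Qed.

Lemma bandit_regret_lower_bound (A : bandit_learner R K) :
  valid_bandit_learner A -> (0 < T)%N ->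
  (forall j, 0 < eps j -> 2 / T%:R * \sum_(i < K) eps i ^+ 2 <= eps j ^+ 2) ->
  exists l, eps_bounded eps l /\
    1 / 16 * Num.sqrt (T%:R * \sum_(j < K) eps j ^+ 2) <= bandit_regret A l T.
Proof.
move=> A_distr T_gt0 eps_large; set S := \sum_(j < K) eps j ^+ 2.
have [dominant | spread] := lerP S (4 * eps js ^+ 2); last first.
  apply: (spread_regret A_distr T_gt0 eps_ge0 eps_large) => [|j].
  - by apply: le_lt_trans spread; rewrite mulr_ge0 ?sqr_ge0.
  - by apply: le_trans (ltW spread); rewrite ler_wpM2l ?js_max.
have [|l [l_bd le_l]] := single_arm_regret (T := T) eps_ge0 k_js
  (val := fun l => bandit_expected_loss A l T).
  rewrite /bandit_expected_loss; under eq_iid_expect => l do rewrite bandit_valueE.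
  exact: (iid_expect_feedback_value _ A T [::] (fair_sum1 R) (flip_loss_mean js (eps js))).
exists l; split=> //; apply: le_trans le_l.
have le_sqrt : Num.sqrt (T%:R * S) <= Num.sqrt (T%:R * (2 * eps js) ^+ 2).
  by rewrite ler_sqrt ?mulr_ge0 ?sqr_ge0 // ler_wpM2l // exprMn; lra.
rewrite [X in _ <= X]sqrtrM ?ler0n // sqrtr_sqr ger0_norm ?mulr_ge0 // in le_sqrt.
have := mulr_ge0 (eps_ge0 js) (sqrtr_ge0 T%:R); lra.
Qed.

End LowerBounds.

Theorem theorem2 :
  exists c : Rdefinitions.R, 0 < c /\
  forall (T K : nat) (eps : 'I_K -> Rdefinitions.R),
    (1 < T)%N -> (1 < K)%N ->
    (forall j, 0 <= eps j) ->
    (forall j, 0 < eps j ->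
       eps j ^+ 2 >= 2 / T%:R * \sum_(i < K) eps i ^+ 2) ->
    exists m : 'I_K -> Rdefinitions.R,
      (forall A : bandit_learner Rdefinitions.R K,
         valid_bandit_learner A ->
         exists l : loss_assignment Rdefinitions.R K,
           (forall (t : nat) (j : 'I_K), (t < T)%N -> `|l t j - m j| <= eps j) /\
           bandit_expected_loss A l T - min_over (cum_loss l T)
             >= c * Num.sqrt (T%:R * \sum_(j < K) eps j ^+ 2))
      /\
      (forall A : full_learner Rdefinitions.R K,
         valid_full_learner A ->
         exists l : loss_assignment Rdefinitions.R K,
           (forall (t : nat) (j : 'I_K), (t < T)%N -> `|l t j - m j| <= eps j) /\
           full_expected_loss A l T - min_over (cum_loss l T)
             >= c * Num.sqrt (T%:R * \big[Num.max/0]_(j < K) eps j ^+ 2)).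
Proof.
exists (1 / 16); split; first lra.
move=> T K eps T_gt1 K_gt1 eps_ge0 eps_large; exists (fun=> 0).
have K_gt0 := ltnW K_gt1.
pose js := [arg max_(j > Ordinal K_gt0) eps j ^+ 2]%O.
have js_max j : eps j ^+ 2 <= eps js ^+ 2 by rewrite /js; case: arg_maxP => // i _; apply.
have [k k_js] : exists k : 'I_K, k != js.
  have [js0 | ?] := eqVneq js (Ordinal K_gt0); last by exists (Ordinal K_gt0); rewrite eq_sym.
  by exists (Ordinal K_gt1); rewrite js0.
have bounded l : eps_bounded eps l -> forall t j, (t < T)%N -> `|l t j - 0| <= eps j.
  by move=> l_bd t j _; rewrite subr0.
split=> [A A_distr | A _].
- have [l [l_bd le_l]] :=
    bandit_regret_lower_bound eps_ge0 k_js js_max A_distr (ltnW T_gt1) eps_large.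
  by exists l; split; [exact: bounded | exact: le_l].
- have [l [l_bd le_l]] := full_regret_lower_bound T eps_ge0 k_js js_max A.
  by exists l; split; [exact: bounded | exact: le_l].
Qed.
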